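(* Let $\nu,\eta\geq1$ and let $(\phi_n)_{n\in\mathbb N}$ be real polynomials with $\phi_n$ of degree $n$ whose linearization coefficients $\alpha^{m,n}_k$ (defined by $\phi_m\phi_n=\sum_{k=0}^{m+n}\alpha^{m,n}_k\phi_k$) satisfy $\sum_{k=0}^{m+n}\vert\alpha^{m,n}_k\vert=1$ for all $m,n\in\mathbb N$, and let $\ast$ be the associated generalized convolution product on $\ell^1_\eta(\mathbb N,\mathbb C)$. Let $B$ be a linear operator on $\ell^1_\nu(\mathbb Z,\ell^1_\eta(\mathbb N,\mathbb C))$ represented as an infinite matrix $(B_{k,l})_{k,l\in\mathbb Z}$ of linear operators on $\ell^1_\eta(\mathbb N,\mathbb C)$ (i.e. $(Bu)_k=\sum_{l\in\mathbb Z}B_{k,l}u_l$), and assume each $B_{k,l}$ is the multiplication operator $v\mapsto b_{k,l}\ast v$ by some $b_{k,l}\in\ell^1_\eta(\mathbb N,\mathbb C)$. Then $$\Vert B\Vert_{\ell^1_\nu(\mathbb Z,\ell^1_\eta)}=\sup_{l\in\mathbb Z}\frac{1}{\nu^{\vert l\vert}}\sum_{k\in\mathbb Z}\Vert b_{k,l}\Vert_{\ell^1_\eta}\nu^{\vert k\vert},$$ i.e. the operator norm of $B$ equals the $\ell^1_\nu$ operator norm of the infinite real matrix $(\Vert b_{k,l}\Vert_{\ell^1_\eta})_{k,l\in\mathbb Z}$.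
   Context: $\ell^1_\eta(\mathbb N,\mathbb C)$ is the space of complex sequences $x=(x_n)_{n\in\mathbb N}$ with $\Vert x\Vert_{\ell^1_\eta}=\sum_n\vert x_n\vert\eta^n<\infty$. The generalized convolution product is $(x\ast y)_k=\sum_{m,n\in\mathbb N}x_my_n\alpha^{m,n}_k$. For a normed space $(X,\Vert\cdot\Vert)$, $\ell^1_\nu(\mathbb Z,X)$ is the space of sequences $u=(u_k)_{k\in\mathbb Z}$ in $X$ with $\Vert u\Vert_{\ell^1_\nu(\mathbb Z,X)}=\sum_{k\in\mathbb Z}\Vert u_k\Vert\nu^{\vert k\vert}<\infty$. $\Vert B\Vert_{\ell^1_\nu(\mathbb Z,\ell^1_\eta)}$ is the operator norm of $B$ on $\ell^1_\nu(\mathbb Z,\ell^1_\eta(\mathbb N,\mathbb C))$. *)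

From HB Require Import structures.
From mathcomp Require Import all_boot all_order all_algebra.
From mathcomp Require Import all_classical all_reals all_analysis.
From mathcomp Require Import complex.

Set Implicit Arguments.
Unset Strict Implicit.
Unset Printing Implicit Defensive.
Import Order.TTheory GRing.Theory Num.Theory.

Local Open Scope classical_set_scope.
Local Open Scope ring_scope.

Section Defs.
Variable R : realType.

Definition cmod (z : R[i]) : R := Num.sqrt (complex.Re z ^+ 2 + complex.Im z ^+ 2).

Definition rsum (T : choiceType) (A : set T) (f : T -> R) : R :=
  fine (\esum_(x in A) (Num.max (f x) 0)%:E)
  - fine (\esum_(x in A) (Num.max (- f x) 0)%:E).

Definition csummable (T : choiceType) (A : set T) (f : T -> R[i]) : Prop :=
  summable A (fun x => (cmod (f x))%:E).

Definition csum (T : choiceType) (A : set T) (f : T -> R[i]) : R[i] :=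
  Complex (rsum A (fun x => complex.Re (f x))) (rsum A (fun x => complex.Im (f x))).

(* norm of ell^1_eta(N, C), valued in \bar R (+oo iff not in the space) *)
Definition l1eta_norm (eta : R) (v : nat -> R[i]) : \bar R :=
  \esum_(n in [set: nat]) (cmod (v n) * eta ^+ n)%:E.

Definition l1nu_norm (nu eta : R) (u : int -> nat -> R[i]) : \bar R :=
  \esum_(k in [set: int]) (l1eta_norm eta (u k) * (nu ^+ `|k|%N)%:E)%E.

Definition lincoef (alpha : nat -> nat -> nat -> R) (m n k : nat) : R :=
  if (k <= m + n)%N then alpha m n k else 0.

Definition gconv (alpha : nat -> nat -> nat -> R) (x y : nat -> R[i]) : nat -> R[i] :=
  fun k => csum [set: nat * nat]
    (fun p => x p.1 * y p.2 * (Complex (lincoef alpha p.1 p.2 k) 0)).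

Definition opnorm (nu eta : R)
  (B : (int -> nat -> R[i]) -> (int -> nat -> R[i])) : \bar R :=
  ereal_sup [set l1nu_norm nu eta (B u) | u in [set u | (l1nu_norm nu eta u <= 1)%E]].

End Defs.

(* Upper bound: the coefficients [alpha m n k] vanish for [k > m + n] and have absolute
   sum 1, so for [eta >= 1] the weighted norm is submultiplicative for the convolution,
   [|b * v| <= |b| |v|]. Summing over the rows of [B u] and exchanging the sums over [k]
   and [l] then bounds [|B u|] by [|u|] times the supremum of the weighted column norms
   of the matrix [(|b k l|)].
   Lower bound: [phi 0] is a constant [c] with [|c| = 1] (the normalisation for
   [m = n = 0]), hence [b * delta_0 = c b], and the unit vector [nu^-|l| delta_(l,0)]
   is mapped to a vector whose norm is the [l]-th column norm.
   Since [csum] is built from the positive and negative parts of real sums, its triangle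
   inequality goes through the linearity of these real sums. *)

From HB Require Import structures.
From mathcomp Require Import all_boot all_order all_algebra.
From mathcomp Require Import all_classical all_reals all_analysis.
From mathcomp Require Import complex.
From mathcomp Require Import ring lra.
Import Order.TTheory GRing.Theory Num.Theory.
Local Open Scope classical_set_scope.
Local Open Scope ring_scope.

Section esum_lemmas.
Context {R : realType}.
Local Open Scope ereal_scope.

Lemma esumZl (T : choiceType) (I : set T) (c : R) (a : T -> \bar R) :
  (0 <= c)%R -> (forall i, I i -> 0 <= a i) ->
  \esum_(i in I) (c%:E * a i) = c%:E * \esum_(i in I) a i.
Proof.
move=> c0 a0.
have sumZ X : fsets I X -> (\sum_(i \in X) (c%:E * a i)%E)%R = c%:E * (\sum_(i \in X) a i)%R.
  move=> [finX XI]; rewrite !fsbig_finite// big_seq [in RHS]big_seq.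
  by rewrite ge0_sume_distrr// => i; rewrite in_fset_set// inE => /XI /a0.
rewrite /esum -ereal_supZl//; last first.
  by apply/set0P; exists 0; exists set0; [exact: fsets_set0 | rewrite fsbig_set0].
congr ereal_sup; apply/seteqP; split=> x /=.
  move=> [X XI <-]; exists (\sum_(i \in X) a i)%R; first by exists X.
  by rewrite sumZ.
by move=> [_ [X XI <-] <-]; exists X; rewrite ?sumZ.
Qed.

Lemma esum_supp1 (T : choiceType) (t : T) (a : T -> \bar R) :
  (forall i, i != t -> a i = 0) -> 0 <= a t -> \esum_(i in [set: T]) a i = a t.
Proof.
move=> a_supp a0; rewrite -(esum_set1 a0) [RHS]esum_mkcond; apply: eq_esum => i _.
by case: ifPn => //; rewrite notin_setE => /eqP/a_supp.
Qed.

Lemma le_esum_term (T : choiceType) (I : set T) (a : T -> \bar R) t :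
  (forall i, I i -> 0 <= a i) -> I t -> a t <= \esum_(i in I) a i.
Proof.
move=> a0 It; apply: esum_ge; exists [set t]; last by rewrite fsbig_set1.
by split=> [|_ ->//]; exact: finite_set1.
Qed.

Lemma exchange_esum (T1 T2 : choiceType) (a : T1 -> T2 -> \bar R) :
  (forall i j, 0 <= a i j) ->
  \esum_(i in [set: T1]) \esum_(j in [set: T2]) a i j =
  \esum_(j in [set: T2]) \esum_(i in [set: T1]) a i j.
Proof.
move=> a0; rewrite !esum_esum//.
rewrite (reindex_esum ([set: T2] `*`` (fun=> [set: T1])) _ (fun x => (x.2, x.1)))//.
split=> [[i j]//|[i j] [i' j'] _ _ [-> ->]//|[i j] _].
by exists (j, i).
Qed.

Lemma esum_prod (T1 T2 : choiceType) (a : T1 -> T2 -> \bar R) :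
  (forall i j, 0 <= a i j) ->
  \esum_(p in [set: T1 * T2]) a p.1 p.2 =
  \esum_(i in [set: T1]) \esum_(j in [set: T2]) a i j.
Proof.
by move=> a0; rewrite esum_esum//; congr esum; apply/seteqP; split=> -[].
Qed.

End esum_lemmas.

Section cmod_lemmas.
Context {R : realType}.
Implicit Types z : R[i].

Lemma cmodE z : cmod z = Normc.normc z.
Proof. by case: z. Qed.

Lemma cmod_ge0 z : 0 <= cmod z.
Proof. exact: sqrtr_ge0. Qed.

Lemma cmod0 : cmod (0 : R[i]) = 0.
Proof. by rewrite cmodE Normc.normc0. Qed.

Lemma cmodM z w : cmod (z * w) = cmod z * cmod w.
Proof. by rewrite !cmodE Normc.normcM. Qed.

Lemma cmod_real (r : R) : cmod (Complex r 0) = `|r|.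
Proof. by rewrite /cmod /= expr0n /= addr0 sqrtr_sqr. Qed.

Lemma ler_Re_cmod z : `|complex.Re z| <= cmod z.
Proof.
by case: z => a b; rewrite /cmod -sqrtr_sqr ler_wsqrtr// lerDl sqr_ge0.
Qed.

Lemma ler_Im_cmod z : `|complex.Im z| <= cmod z.
Proof.
by case: z => a b; rewrite /cmod -sqrtr_sqr ler_wsqrtr// lerDr sqr_ge0.
Qed.

Lemma ler_dot_cmod (a b : R) z : a ^+ 2 + b ^+ 2 = 1 ->
  a * complex.Re z + b * complex.Im z <= cmod z.
Proof.
case: z => c d /= ab1; apply: le_trans (ler_norm _) _.
rewrite /cmod -sqrtr_sqr ler_wsqrtr//= -[X in _ <= X]mul1r -ab1.
have -> : (a ^+ 2 + b ^+ 2) * (c ^+ 2 + d ^+ 2) =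
  (a * c + b * d) ^+ 2 + (a * d - b * c) ^+ 2 by ring.
by rewrite lerDl sqr_ge0.
Qed.

End cmod_lemmas.

Lemma max0_subN {R : realDomainType} (x : R) : Num.max x 0 - Num.max (- x) 0 = x.
Proof. by rewrite !maxEle; case: ifPn; case: ifPn; rewrite -?ltNge; lra. Qed.

Lemma fine_EFinMl {R : realDomainType} (c : R) (x : \bar R) :
  0 <= c -> fine (c%:E * x)%E = c * fine x.
Proof.
move=> c0; have [->|cneq0] := eqVneq c 0; first by rewrite mul0e mul0r.
have cpos : 0 < c by rewrite lt_def cneq0.
by case: x => [r||] //=; [rewrite mulry | rewrite mulrNy]; rewrite gtr0_sg// mul1e mulr0.
Qed.

Section real_sum.
Context {R : realType} {T : choiceType} (A : set T).
Implicit Types (c : R) (f g h p n : T -> R).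

Lemma esum_EFinD {g h} : (forall x, A x -> 0 <= g x) -> (forall x, A x -> 0 <= h x) ->
  \esum_(x in A) (g x + h x)%:E = (\esum_(x in A) (g x)%:E + \esum_(x in A) (h x)%:E)%E.
Proof.
move=> g0 h0; rewrite (eq_esum (fun x _ => EFinD (g x) (h x))).
by rewrite esumD// => x Ax; rewrite lee_fin ?g0 ?h0.
Qed.

Lemma fin_num_esum_le {g h} : (forall x, A x -> 0 <= g x <= h x) ->
  \esum_(x in A) (h x)%:E \is a fin_num -> \esum_(x in A) (g x)%:E \is a fin_num.
Proof.
have esum0 (k : T -> R) : (forall x, A x -> 0 <= k x) -> (0 <= \esum_(x in A) (k x)%:E)%E.
  by move=> k0; apply: esum_ge0 => x /k0; rewrite lee_fin.
move=> gh; have h0 x : A x -> 0 <= h x by move=> /gh /andP[/le_trans]; apply.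
rewrite !ge0_fin_numE ?esum0// => [hfin|x /gh /andP[]//].
by apply: le_lt_trans hfin; apply: le_esum => x /gh /andP[_]; rewrite lee_fin.
Qed.

Lemma rsumN f : rsum A (fun x => - f x) = - rsum A f.
Proof.
rewrite /rsum opprB; congr (fine _ - fine _).
by apply: eq_esum => x _; rewrite opprK.
Qed.

Lemma rsumZ c f : rsum A (fun x => c * f x) = c * rsum A f.
Proof.
wlog c0 : c / 0 <= c => [H|].
  have [/H//|/ltW c0] := leP 0 c.
  transitivity (rsum A (fun x => - (- c * f x))).
    by congr rsum; apply: funext => x; rewrite mulNr opprK.
  by rewrite rsumN H ?oppr_ge0// mulNr opprK.
have maxZ g : \esum_(x in A) (Num.max (c * g x) 0)%:E =
    (c%:E * \esum_(x in A) (Num.max (g x) 0)%:E)%E.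
  rewrite -esumZl//; last by move=> x _; rewrite lee_fin le_max lexx orbT.
  by apply: eq_esum => x _; rewrite -EFinM maxr_pMr// mulr0.
rewrite /rsum mulrBr -!fine_EFinMl// -!maxZ.
by congr (fine _ - fine _); apply: eq_esum => x _; rewrite mulrN.
Qed.

Lemma rsum_sub f p n :
  (forall x, A x -> 0 <= p x) -> (forall x, A x -> 0 <= n x) ->
  \esum_(x in A) (p x)%:E \is a fin_num -> \esum_(x in A) (n x)%:E \is a fin_num ->
  (forall x, A x -> f x = p x - n x) ->
  rsum A f = fine (\esum_(x in A) (p x)%:E) - fine (\esum_(x in A) (n x)%:E).
Proof.
move=> p0 n0 pfin nfin fE.
have fpos0 x : A x -> 0 <= Num.max (f x) 0 by rewrite le_max lexx orbT.
have fneg0 x : A x -> 0 <= Num.max (- f x) 0 by rewrite le_max lexx orbT.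
have fposfin : \esum_(x in A) (Num.max (f x) 0)%:E \is a fin_num.
  apply: (fin_num_esum_le _ pfin) => x Ax; rewrite fpos0// ge_max p0// fE//.
  by rewrite gerBl n0.
have fnegfin : \esum_(x in A) (Num.max (- f x) 0)%:E \is a fin_num.
  apply: (fin_num_esum_le _ nfin) => x Ax; rewrite fneg0// ge_max n0// fE//.
  by rewrite opprB gerBl p0.
have balance : \esum_(x in A) (Num.max (f x) 0 + n x)%:E =
    \esum_(x in A) (p x + Num.max (- f x) 0)%:E.
  apply: eq_esum => x Ax; congr EFin.
  by have := max0_subN (f x); rewrite fE //; lra.
move: balance; rewrite (esum_EFinD fpos0 n0) (esum_EFinD p0 fneg0) => /(congr1 fine).
by rewrite !fineD// /rsum; lra.
Qed.

Lemma rsumD f g :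
  \esum_(x in A) `|f x|%:E \is a fin_num -> \esum_(x in A) `|g x|%:E \is a fin_num ->
  rsum A (fun x => f x + g x) = rsum A f + rsum A g.
Proof.
have max0 (r : R) : 0 <= Num.max r 0 by rewrite le_max lexx orbT.
have pos0 h x : A x -> 0 <= Num.max (h x) 0 by [].
have neg0 h x : A x -> 0 <= Num.max (- h x) 0 by [].
have posfin h : \esum_(x in A) `|h x|%:E \is a fin_num ->
    \esum_(x in A) (Num.max (h x) 0)%:E \is a fin_num.
  by apply: fin_num_esum_le => x _; rewrite max0 ge_max ler_norm normr_ge0.
have negfin h : \esum_(x in A) `|h x|%:E \is a fin_num ->
    \esum_(x in A) (Num.max (- h x) 0)%:E \is a fin_num.
  by apply: fin_num_esum_le => x _; rewrite max0 ge_max -normrN ler_norm normr_ge0.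
move=> /[dup] /posfin fpfin /negfin fnfin /[dup] /posfin gpfin /negfin gnfin.
rewrite (@rsum_sub _ (fun x => Num.max (f x) 0 + Num.max (g x) 0)
                     (fun x => Num.max (- f x) 0 + Num.max (- g x) 0)).
- by rewrite (esum_EFinD (pos0 f) (pos0 g)) (esum_EFinD (neg0 f) (neg0 g)) !fineD// /rsum; lra.
- by move=> x _; rewrite addr_ge0.
- by move=> x _; rewrite addr_ge0.
- by rewrite (esum_EFinD (pos0 f) (pos0 g)) fin_numD fpfin.
- by rewrite (esum_EFinD (neg0 f) (neg0 g)) fin_numD fnfin.
- by move=> x _; have := max0_subN (f x); have := max0_subN (g x); lra.
Qed.

Lemma rsum_le_esum f g : (forall x, A x -> f x <= g x) ->
  (forall x, A x -> 0 <= g x) -> ((rsum A f)%:E <= \esum_(x in A) (g x)%:E)%E.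
Proof.
move=> fg g0; have max0 (r : R) : 0 <= Num.max r 0 by rewrite le_max lexx orbT.
set P := \esum_(x in A) (Num.max (f x) 0)%:E.
apply: (@le_trans _ _ P); last first.
  by apply: le_esum => x Ax; rewrite lee_fin ge_max fg// g0.
have P0 : (0 <= P)%E by apply: esum_ge0 => x _; rewrite lee_fin.
have [Pfin|] := boolP (P \is a fin_num); last first.
  by rewrite ge0_fin_numE// -leNgt leye_eq => /eqP ->; rewrite leey.
rewrite -(fineK Pfin) lee_fin /rsum gerBl//.
by apply/fine_ge0/esum_ge0 => x _; rewrite lee_fin.
Qed.

End real_sum.

Section complex_sum.
Context {R : realType} {T : choiceType}.

Lemma rsum_supp1 {t : T} {f : T -> R} :
  (forall x, x != t -> f x = 0) -> rsum [set: T] f = f t.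
Proof.
move=> f_supp; have max0 (r : R) : (0 <= (Num.max r 0)%:E)%E.
  by rewrite lee_fin le_max lexx orbT.
rewrite /rsum !(@esum_supp1 _ _ t) ?max0//= ?max0_subN// => x /f_supp ->.
  by rewrite oppr0 maxxx.
by rewrite maxxx.
Qed.

Lemma csum_supp1 {t : T} {f : T -> R[i]} :
  (forall x, x != t -> f x = 0) -> csum [set: T] f = f t.
Proof.
move=> f_supp; have [Re_supp Im_supp] :
    (forall x, x != t -> complex.Re (f x) = 0) /\ (forall x, x != t -> complex.Im (f x) = 0).
  by split=> x /f_supp ->.
by rewrite /csum (rsum_supp1 Re_supp) (rsum_supp1 Im_supp); case: (f t).
Qed.

(* With [(a, b)] the unit vector along the sum,
   [cmod (csum A f) = rsum A (a Re f + b Im f)], and [a Re z + b Im z <= cmod z]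
   by Cauchy-Schwarz. *)
Lemma cmod_csum_le (A : set T) (f : T -> R[i]) :
  ((cmod (csum A f))%:E <= \esum_(x in A) (cmod (f x))%:E)%E.
Proof.
have S0 : (0 <= \esum_(x in A) (cmod (f x))%:E)%E.
  by apply: esum_ge0 => x _; rewrite lee_fin cmod_ge0.
have [Sfin|] := boolP (\esum_(x in A) (cmod (f x))%:E \is a fin_num); last first.
  by rewrite ge0_fin_numE// -leNgt leye_eq => /eqP ->; rewrite leey.
rewrite /csum; set x := rsum A _; set y := rsum A _; set r := cmod _.
have [->|rneq0] := eqVneq r 0; first exact: S0.
have r2 : r ^+ 2 = x ^+ 2 + y ^+ 2 by rewrite sqr_sqrtr// addr_ge0// sqr_ge0.
pose a := x / r; pose b := y / r.
have ab1 : a ^+ 2 + b ^+ 2 = 1.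
  by rewrite !expr_div_n -mulrDl -r2 divff// expf_neq0.
have le1 (s : R) : s ^+ 2 <= 1 -> `|s| <= 1.
  by move=> s1; rewrite -(@expr_le1 _ 2)// -normrX ger0_norm// sqr_ge0.
have part_fin (s : R) (g : R[i] -> R) : s ^+ 2 <= 1 -> (forall z, `|g z| <= cmod z) ->
    \esum_(t in A) `|s * g (f t)|%:E \is a fin_num.
  move=> /le1 s1 gz; apply: (fin_num_esum_le _ _ Sfin) => t _.
  by rewrite normr_ge0 normrM (le_trans (ler_piMl _ s1)).
have -> : r = rsum A (fun t => a * complex.Re (f t) + b * complex.Im (f t)).
  have a2 : a ^+ 2 <= 1 by rewrite -ab1 lerDl sqr_ge0.
  have b2 : b ^+ 2 <= 1 by rewrite -ab1 lerDr sqr_ge0.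
  rewrite rsumD ?(part_fin _ _ a2 (@ler_Re_cmod R)) ?(part_fin _ _ b2 (@ler_Im_cmod R))//.
  rewrite !rsumZ -/x -/y /a /b mulrAC [y / r * y]mulrAC -mulrDl -!expr2 -r2.
  by rewrite expr2 mulfK.
apply: rsum_le_esum => t _; [exact: ler_dot_cmod | exact: cmod_ge0].
Qed.

End complex_sum.

Lemma gconv0r (R : realType) (alpha : nat -> nat -> nat -> R) (v : nat -> R[i]) j :
  gconv alpha v (fun=> 0) j = 0.
Proof. by rewrite /gconv (@csum_supp1 _ _ (0, 0)%N) => [|p _]; rewrite /= mulr0 mul0r. Qed.

Section linearization.
Context {R : realType} {phi : nat -> {poly R}} {alpha : nat -> nat -> nat -> R}.
Hypothesis phi_size : forall n, size (phi n) = n.+1.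

Lemma graded_combination_eq0 N (a : nat -> R) :
  \sum_(k < N) a k *: phi k = 0 -> forall k, (k < N)%N -> a k = 0.
Proof.
elim: N => [//|N IH] /[1!big_ord_recr] /= comb0.
have aN : a N = 0.
  have /eqP := congr1 (fun p : {poly R} => p`_N) comb0.
  rewrite /= coefD coef_sum coefZ coef0 big1 ?add0r => [|i _]; last first.
    by rewrite coefZ nth_default ?mulr0// phi_size.
  have lead_neq0 : (phi N)`_N != 0.
    rewrite -[N in _`_N]/(N.+1.-1) -(phi_size N) -lead_coefE lead_coef_eq0.
    by rewrite -size_poly_eq0 phi_size.
  by rewrite mulf_eq0 (negPf lead_neq0) orbF => /eqP.
move: comb0; rewrite aN scale0r addr0 => /IH aE k; rewrite ltnS leq_eqVlt.
by case/orP=> [/eqP ->|/aE].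
Qed.

Hypothesis phi_lin :
  forall m n, phi m * phi n = \sum_(k < (m + n).+1) alpha m n k *: phi k.

(* [phi m * phi 0 = c *: phi m] with [c = (phi 0)`_0], and coordinates on the graded
   family [phi] are unique. *)
Lemma lincoef_r0 m k : lincoef alpha m 0 k = if k == m then (phi 0)`_0 else 0.
Proof.
rewrite /lincoef addn0; case: leqP => [km|mk]; last by rewrite gtn_eqF.
have /size_poly1P [c _ phi0E] : size (phi 0) == 1%N by rewrite phi_size.
rewrite phi0E coefC /=; apply/eqP; rewrite -subr_eq0; apply/eqP; move: k km.
apply: (@graded_combination_eq0 m.+1); under eq_bigr do rewrite scalerBl.
have := phi_lin m 0; rewrite addn0 sumrB => <-.
rewrite phi0E mulrC mul_polyC big_ord_recr /= eqxx big1 ?add0r ?subrr// => i _.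
by rewrite ltn_eqF ?scale0r.
Qed.

Lemma normr_phi0_coef :
  (forall m n, \sum_(k < (m + n).+1) `|alpha m n k| = 1) -> `|(phi 0)`_0| = 1.
Proof.
move=> /(_ 0 0)%N; rewrite big_ord1.
by have := lincoef_r0 0 0; rewrite /lincoef /= => ->.
Qed.

Lemma gconv_delta0 (v : nat -> R[i]) (d : R[i]) j :
  gconv alpha v (fun n => if n == 0%N then d else 0) j =
  v j * d * Complex ((phi 0)`_0) 0.
Proof.
rewrite /gconv (@csum_supp1 _ _ (j, 0)%N) /=; first by rewrite lincoef_r0 eqxx.
move=> [m n] /=; have [->|n0] := eqVneq n 0%N; last by rewrite mulr0 mul0r.
rewrite lincoef_r0 => mj; have jm : j != m by apply: contra mj => /eqP ->.
by rewrite (negPf jm) -[Complex 0 0]/(0 : R[i]) mulr0.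
Qed.

End linearization.

Lemma esum_prodM (R : realType) (T1 T2 : choiceType) (a : T1 -> R) (b : T2 -> R) :
  (forall i, 0 <= a i) -> (forall j, 0 <= b j) ->
  \esum_(j in [set: T2]) (b j)%:E \is a fin_num ->
  \esum_(p in [set: T1 * T2]) (a p.1 * b p.2)%:E =
  ((\esum_(i in [set: T1]) (a i)%:E) * \esum_(j in [set: T2]) (b j)%:E)%E.
Proof.
move=> a0 b0 bfin.
rewrite (@esum_prod _ _ _ (fun i j => (a i * b j)%:E)) => [|i j]; last by rewrite lee_fin mulr_ge0.
transitivity (\esum_(i in [set: T1]) ((a i)%:E * \esum_(j in [set: T2]) (b j)%:E))%E.
  apply: eq_esum => i _; rewrite -esumZl//.
  by move=> j _; rewrite lee_fin.
rewrite -(fineK bfin); under eq_esum do rewrite muleC.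
rewrite esumZl 1?muleC//; last by move=> i _; rewrite lee_fin.
by apply/fine_ge0/esum_ge0 => j _; rewrite lee_fin.
Qed.

Lemma cmod_gconv_le (R : realType) (alpha : nat -> nat -> nat -> R) (v w : nat -> R[i]) j :
  ((cmod (gconv alpha v w j))%:E <=
   \esum_(p in [set: nat * nat])
     (cmod (v p.1) * cmod (w p.2) * `|lincoef alpha p.1 p.2 j|)%:E)%E.
Proof.
apply: (le_trans (cmod_csum_le _ _)); apply: le_esum => p _.
by rewrite !cmodM cmod_real.
Qed.

Lemma l1eta_norm_ge0 (R : realType) (eta : R) (v : nat -> R[i]) :
  0 <= eta -> (0 <= l1eta_norm eta v)%E.
Proof.
by move=> eta0; apply: esum_ge0 => n _; rewrite lee_fin mulr_ge0 ?cmod_ge0 ?exprn_ge0.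
Qed.

Section gconv_bound.
Context {R : realType} {alpha : nat -> nat -> nat -> R} {eta : R}.
Hypothesis eta1 : 1 <= eta.
Hypothesis alpha_norm : forall m n, \sum_(k < (m + n).+1) `|alpha m n k| = 1.

Let eta0 : 0 <= eta. Proof. exact: le_trans eta1. Qed.
Local Hint Resolve eta0 : core.

Lemma lincoef_psum_le m n k : \sum_(0 <= i < k) `|lincoef alpha m n i| <= 1.
Proof.
set N := (m + n).+1.
have tail0 : \sum_(N <= i < k + N) `|lincoef alpha m n i| = 0.
  rewrite big1_seq// => i /andP[_]; rewrite mem_index_iota => /andP[Ni _].
  by rewrite /lincoef leqNgt Ni normr0.
have head1 : \sum_(0 <= i < N) `|lincoef alpha m n i| = 1.
  rewrite big_mkord -(alpha_norm m n); apply: eq_bigr => i _.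
  by rewrite /lincoef -ltnS ltn_ord.
apply: (@le_trans _ _ (\sum_(0 <= i < k + N) `|lincoef alpha m n i|)).
  by rewrite [X in _ <= X](big_cat_nat _ (n := k)) ?leq_addr//= lerDl sumr_ge0.
by rewrite (big_cat_nat _ (n := N)) ?leq_addl//= tail0 head1 addr0.
Qed.

Lemma esum_lincoef_weight_le m n :
  (\esum_(j in [set: nat]) (`|lincoef alpha m n j| * eta ^+ j)%:E <= (eta ^+ (m + n))%:E)%E.
Proof.
have etaX0 : 0 <= eta ^+ (m + n) by rewrite exprn_ge0.
have weight_le j : `|lincoef alpha m n j| * eta ^+ j <= eta ^+ (m + n) * `|lincoef alpha m n j|.
  rewrite /lincoef; case: leqP => jmn; last by rewrite normr0 mul0r mulr0.
  by rewrite mulrC ler_wpM2r// ler_weXn2l.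
apply: (@le_trans _ _ (\esum_(j in [set: nat]) (eta ^+ (m + n) * `|lincoef alpha m n j|)%:E)).
  by apply: le_esum => j _; rewrite lee_fin.
rewrite (eq_esum (fun j _ => EFinM _ _)) esumZl//.
rewrite -[X in (_ <= X)%E]mule1 lee_wpmul2l ?lee_fin//.
rewrite -nneseries_esumT => [|j]; last by rewrite lee_fin.
apply: lime_le; first by apply: is_cvg_nneseries => j _ _; rewrite lee_fin.
by apply: nearW => k /=; rewrite sumEFin lee_fin lincoef_psum_le.
Qed.

Lemma l1eta_norm_gconv_le (v w : nat -> R[i]) : l1eta_norm eta w \is a fin_num ->
  (l1eta_norm eta (gconv alpha v w) <= l1eta_norm eta v * l1eta_norm eta w)%E.
Proof.
move=> wfin; pose c (p : nat * nat) := cmod (v p.1) * cmod (w p.2).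
have c0 p : 0 <= c p by rewrite mulr_ge0 ?cmod_ge0.
pose F j p := (eta ^+ j * (c p * `|lincoef alpha p.1 p.2 j|))%:E.
have F0 j p : (0 <= F j p)%E by rewrite /F lee_fin !mulr_ge0 ?exprn_ge0 ?cmod_ge0.
have pointwise j : ((cmod (gconv alpha v w j) * eta ^+ j)%:E <=
    \esum_(p in [set: nat * nat]) F j p)%E.
  rewrite EFinM muleC (eq_esum (fun p _ => EFinM _ _)) esumZl ?exprn_ge0//.
    by rewrite lee_wpmul2l ?lee_fin ?exprn_ge0// cmod_gconv_le.
  by move=> p _; rewrite lee_fin mulr_ge0.
have inner p : (\esum_(j in [set: nat]) F j p <=
    ((cmod (v p.1) * eta ^+ p.1) * (cmod (w p.2) * eta ^+ p.2))%:E)%E.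
  rewrite (eq_esum (_ : forall j, _ -> F j p =
      ((c p)%:E * (`|lincoef alpha p.1 p.2 j| * eta ^+ j)%:E)%E)); last first.
    by move=> j _; rewrite /F -EFinM mulrCA [_ * eta ^+ j]mulrC.
  rewrite esumZl//; last by move=> j _; rewrite lee_fin mulr_ge0 ?exprn_ge0.
  apply: le_trans (lee_wpmul2l _ (esum_lincoef_weight_le _ _)) _; first by rewrite lee_fin.
  by rewrite -EFinM lee_fin exprD /c mulrACA.
apply: (le_trans (le_esum (fun j _ => pointwise j))).
rewrite exchange_esum//; apply: (le_trans (le_esum (fun p _ => inner p))).
have weighted0 (z : nat -> R[i]) k : 0 <= cmod (z k) * eta ^+ k.
  by rewrite mulr_ge0 ?cmod_ge0 ?exprn_ge0.
by rewrite (@esum_prodM _ _ _ (fun i => cmod (v i) * eta ^+ i) (fun j => cmod (w j) * eta ^+ j)).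
Qed.

End gconv_bound.

Definition gconv_matrix {R : realType} (alpha : nat -> nat -> nat -> R)
    (b : int -> int -> nat -> R[i]) (u : int -> nat -> R[i]) : int -> nat -> R[i] :=
  fun k j => csum [set: int] (fun l => gconv alpha (b k l) (u l) j).

Definition colnorm {R : realType} (nu eta : R) (b : int -> int -> nat -> R[i]) (l : int) : \bar R :=
  ((nu ^+ `|l|%N)^-1)%:E * \esum_(k in [set: int]) (l1eta_norm eta (b k l) * (nu ^+ `|k|%N)%:E).

Section gconv_matrix_norm.
Context {R : realType} {alpha : nat -> nat -> nat -> R} {nu eta : R}.
Context {b : int -> int -> nat -> R[i]}.
Hypotheses (nu1 : 1 <= nu) (eta1 : 1 <= eta).
Hypothesis alpha_norm : forall m n, \sum_(k < (m + n).+1) `|alpha m n k| = 1.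

Let eta0 : 0 <= eta. Proof. exact: le_trans eta1. Qed.
Let nuX_gt0 n : 0 < nu ^+ n. Proof. by rewrite exprn_gt0// (lt_le_trans ltr01). Qed.
Let nuX_ge0 n : 0 <= nu ^+ n. Proof. exact: ltW. Qed.
Let etaX_ge0 n : 0 <= eta ^+ n. Proof. exact: exprn_ge0. Qed.
Let N_ge0 v : (0 <= l1eta_norm eta v)%E. Proof. exact: l1eta_norm_ge0. Qed.
Local Hint Resolve eta0 nuX_gt0 nuX_ge0 etaX_ge0 N_ge0 : core.

Lemma l1eta_norm_fin (u : int -> nat -> R[i]) l :
  (l1nu_norm nu eta u < +oo)%E -> l1eta_norm eta (u l) \is a fin_num.
Proof.
move=> ufin; rewrite ge0_fin_numE//.
have : (l1eta_norm eta (u l) * (nu ^+ `|l|%N)%:E <= l1nu_norm nu eta u)%E.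
  by apply: le_esum_term => // k _; rewrite mule_ge0 ?lee_fin.
case: (l1eta_norm eta (u l)) => [r _|/=|//]; first exact: ltry.
by rewrite gt0_mulye ?lte_fin// leye_eq => /eqP uoo; move: ufin; rewrite uoo ltxx.
Qed.

Lemma colnorm_ge0 l : (0 <= colnorm nu eta b l)%E.
Proof.
by rewrite mule_ge0 ?lee_fin ?invr_ge0// esum_ge0// => k _; rewrite mule_ge0 ?lee_fin.
Qed.

Lemma l1eta_norm_gconv_matrix_le u k : (l1nu_norm nu eta u < +oo)%E ->
  (l1eta_norm eta (gconv_matrix alpha b u k) <=
   \esum_(l in [set: int]) (l1eta_norm eta (b k l) * l1eta_norm eta (u l)))%E.
Proof.
move=> ufin; apply: (@le_trans _ _
    (\esum_(l in [set: int]) l1eta_norm eta (gconv alpha (b k l) (u l)))); last first.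
  apply: le_esum => l _.
  exact: l1eta_norm_gconv_le eta1 alpha_norm _ _ (l1eta_norm_fin _ l ufin).
rewrite /l1eta_norm exchange_esum => [|l j]; last by rewrite lee_fin mulr_ge0 ?cmod_ge0.
apply: le_esum => j _; rewrite EFinM muleC.
under [X in (_ <= X)%E]eq_esum do rewrite EFinM muleC.
rewrite esumZl// => [|l _]; last by rewrite lee_fin cmod_ge0.
by rewrite lee_wpmul2l ?lee_fin//; exact: cmod_csum_le.
Qed.

Lemma exchange_esum_matrix (U : int -> R) : (forall l, 0 <= U l) ->
  (\esum_(k in [set: int])
     (\esum_(l in [set: int]) (l1eta_norm eta (b k l) * (U l)%:E)) * (nu ^+ `|k|%N)%:E =
   \esum_(l in [set: int])
     (U l)%:E * \esum_(k in [set: int]) (l1eta_norm eta (b k l) * (nu ^+ `|k|%N)%:E))%E.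
Proof.
move=> U0; transitivity (\esum_(k in [set: int]) \esum_(l in [set: int])
    ((nu ^+ `|k|%N)%:E * (l1eta_norm eta (b k l) * (U l)%:E)))%E.
  apply: eq_esum => k _; rewrite muleC esumZl//.
  by move=> l _; rewrite mule_ge0 ?lee_fin ?U0.
rewrite exchange_esum => [|k l]; last by rewrite !mule_ge0 ?lee_fin ?U0.
apply: eq_esum => l _; rewrite -esumZl//; last by move=> k _; rewrite mule_ge0 ?lee_fin ?U0.
by apply: eq_esum => k _; rewrite muleCA [RHS]muleCA [((U l)%:E * _)%E]muleC.
Qed.

Lemma l1nu_norm_gconv_matrix_le {u m} :
  (l1nu_norm nu eta u < +oo)%E -> 0 <= m -> (forall l, (colnorm nu eta b l <= m%:E)%E) ->
  (l1nu_norm nu eta (gconv_matrix alpha b u) <= m%:E * l1nu_norm nu eta u)%E.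
Proof.
move=> ufin m0 col_le.
pose U l := fine (l1eta_norm eta (u l)).
have UE l : l1eta_norm eta (u l) = (U l)%:E by rewrite fineK// l1eta_norm_fin.
have U0 l : 0 <= U l by rewrite -lee_fin -UE.
have col_le' l : (\esum_(k in [set: int]) (l1eta_norm eta (b k l) * (nu ^+ `|k|%N)%:E) <=
    (nu ^+ `|l|%N)%:E * m%:E)%E.
  apply: (@le_trans _ _ ((nu ^+ `|l|%N)%:E * colnorm nu eta b l)%E).
    by rewrite /colnorm muleA -EFinM mulfV ?gt_eqF// mul1e.
  by rewrite lee_wpmul2l ?lee_fin.
rewrite /l1nu_norm; apply: (@le_trans _ _ (\esum_(k in [set: int])
    (\esum_(l in [set: int]) (l1eta_norm eta (b k l) * (U l)%:E)) * (nu ^+ `|k|%N)%:E)%E).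
  apply: le_esum => k _; apply: lee_wpmul2r; first by rewrite lee_fin.
  by under eq_esum do rewrite -UE; exact: l1eta_norm_gconv_matrix_le.
rewrite exchange_esum_matrix//; apply: (@le_trans _ _
    (\esum_(l in [set: int]) (m%:E * ((U l)%:E * (nu ^+ `|l|%N)%:E)))%E).
  apply: le_esum => l _; rewrite muleCA; apply: lee_wpmul2l; first by rewrite lee_fin.
  by rewrite muleC col_le'.
rewrite esumZl//; last by move=> l _; rewrite mule_ge0 ?lee_fin ?U0.
by under [X in (_ <= _ * X)%E]eq_esum do rewrite UE.
Qed.

Lemma l1nu_norm_gconv_matrix_le_sup u : (l1nu_norm nu eta u <= 1)%E ->
  (l1nu_norm nu eta (gconv_matrix alpha b u) <= ereal_sup (range (colnorm nu eta b)))%E.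
Proof.
move=> u1; set M := ereal_sup _.
have col_le l : (colnorm nu eta b l <= M)%E by apply: ereal_sup_ubound; exists l.
have M0 : (0 <= M)%E := le_trans (colnorm_ge0 0) (col_le 0).
have [->|Mnoo] := eqVneq M +oo%E; first exact: leey.
have Mfin : M \is a fin_num by rewrite ge0_fin_numE// ltey.
rewrite -(fineK Mfin) in col_le *.
have ufin : (l1nu_norm nu eta u < +oo)%E := le_lt_trans u1 (ltry 1).
apply: (le_trans (l1nu_norm_gconv_matrix_le ufin (fine_ge0 M0) col_le)).
by rewrite -[X in (_ <= X)%E]mule1 lee_wpmul2l// lee_fin fine_ge0.
Qed.

Lemma l1eta_normZr (v : nat -> R[i]) (z : R[i]) :
  l1eta_norm eta (fun j => v j * z) = ((cmod z)%:E * l1eta_norm eta v)%E.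
Proof.
rewrite -esumZl ?cmod_ge0// => [|j _]; last by rewrite lee_fin mulr_ge0 ?cmod_ge0.
by apply: eq_esum => j _; rewrite -EFinM cmodM mulrAC mulrC.
Qed.

Lemma l1eta_norm_delta0 (z : R[i]) :
  l1eta_norm eta (fun n => if n == 0%N then z else 0) = (cmod z)%:E.
Proof.
rewrite /l1eta_norm (@esum_supp1 _ _ 0%N) /= ?expr0 ?mulr1// => [n /negPf ->|].
  by rewrite cmod0 mul0r.
by rewrite lee_fin ?mulr_ge0 ?cmod_ge0.
Qed.

Lemma colnorm_attained {phi : nat -> {poly R}} :
  (forall n, size (phi n) = n.+1) ->
  (forall m n, phi m * phi n = \sum_(k < (m + n).+1) alpha m n k *: phi k) ->
  forall l, exists2 u, l1nu_norm nu eta u = 1%E &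
    l1nu_norm nu eta (gconv_matrix alpha b u) = colnorm nu eta b l.
Proof.
move=> phi_size phi_lin l; set c := (nu ^+ `|l|%N)^-1.
have c_gt0 : 0 < c by rewrite invr_gt0.
pose u k n : R[i] := if k == l then (if n == 0%N then Complex c 0 else 0) else 0.
have u_off k : k != l -> l1eta_norm eta (u k) = 0.
  by move=> /negPf kl; apply: esum1 => n _; rewrite /u kl cmod0 mul0r.
have Mu k : gconv_matrix alpha b u k = fun j => b k l j * (Complex c 0 * Complex ((phi 0)`_0) 0).
  apply: funext => j; rewrite /gconv_matrix (@csum_supp1 _ _ l) /u ?eqxx.
    by rewrite (gconv_delta0 phi_size phi_lin) mulrA.
  by move=> k' /negPf ->; exact: gconv0r.
exists u.
  rewrite /l1nu_norm (@esum_supp1 _ _ l) => [|k /u_off ->|]; last by rewrite mule_ge0 ?lee_fin.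
    by rewrite /u eqxx l1eta_norm_delta0 cmod_real gtr0_norm// -EFinM mulVf ?gt_eqF.
  by rewrite mul0e.
rewrite /l1nu_norm /colnorm -esumZl ?invr_ge0// => [|k _]; last by rewrite mule_ge0 ?lee_fin.
apply: eq_esum => k _; rewrite Mu l1eta_normZr cmodM !cmod_real.
by rewrite (normr_phi0_coef phi_size phi_lin alpha_norm) mulr1 gtr0_norm// muleA.
Qed.

End gconv_matrix_norm.

Theorem lemma3p3 (R : realType) (nu eta : R)
  (phi : nat -> {poly R}) (alpha : nat -> nat -> nat -> R)
  (b : int -> int -> nat -> R[i])
  (B : (int -> nat -> R[i]) -> (int -> nat -> R[i])) :
  1 <= nu -> 1 <= eta ->
  (forall n, size (phi n) = n.+1) ->
  (forall m n, phi m * phi n = \sum_(k < (m + n).+1) alpha m n k *: phi k) ->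
  (forall m n, \sum_(k < (m + n).+1) `|alpha m n k| = 1) ->
  (forall k l, (l1eta_norm eta (b k l) < +oo)%E) ->
  (* B is a linear operator on ell^1_nu(Z, ell^1_eta(N, C)) *)
  (forall u, (l1nu_norm nu eta u < +oo)%E -> (l1nu_norm nu eta (B u) < +oo)%E) ->
  (forall (a : R[i]) u v, (l1nu_norm nu eta u < +oo)%E ->
     (l1nu_norm nu eta v < +oo)%E ->
     B (fun k j => a * u k j + v k j) = (fun k j => a * B u k j + B v k j)) ->
  (* matrix representation (B u)_k = sum_l b_{k,l} * u_l (unconditional sums) *)
  (forall u, (l1nu_norm nu eta u < +oo)%E -> forall k j,
     csummable [set: int] (fun l => gconv alpha (b k l) (u l) j) /\
     B u k j = csum [set: int] (fun l => gconv alpha (b k l) (u l) j)) ->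
  opnorm nu eta B =
  ereal_sup (range (fun l : int =>
    ((nu ^+ `|l|%N)^-1)%:E *
    \esum_(k in [set: int]) (l1eta_norm eta (b k l) * (nu ^+ `|k|%N)%:E))%E).
Proof.
move=> nu1 eta1 phi_size phi_lin alpha_norm _ _ _ B_mx.
have BE u : (l1nu_norm nu eta u < +oo)%E -> B u = gconv_matrix alpha b u.
  by move=> ufin; apply/funext => k; apply/funext => j; rewrite (B_mx u ufin k j).2.
change (opnorm nu eta B = ereal_sup (range (colnorm nu eta b))).
apply/le_anti/andP; split.
  apply: ge_ereal_sup => _ [u /= u1 <-].
  rewrite BE ?(le_lt_trans u1 (ltry 1))//.
  exact: l1nu_norm_gconv_matrix_le_sup.
apply: ge_ereal_sup => _ [l _ <-].
have [u u1 <-] := colnorm_attained (b := b) nu1 eta1 alpha_norm phi_size phi_lin l.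
apply: ereal_sup_ubound; exists u; first by rewrite /= u1.
by rewrite BE// u1 ltry.
Qed.
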